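(* Let $\beta_1=\frac{p_1}{q_1}>1$ and $\beta_2=\frac{p_2}{q_2}>1$ with $\gcd(p_1,q_1)=\gcd(p_2,q_2)=1$, and suppose $p_1=k_1q_2$ and $p_2=k_2q_1$ for some $k_1,k_2\in\mathbb{N}$. Write $p_1=d_1q_1+j_1$ and $p_2=d_2q_2+j_2$ with $d_i\in\mathbb{N}$ and $0\le j_1<q_1$, $0\le j_2<q_2$. Then each of the sets $O_{T_{\beta_1\circ\beta_2}}(1)$, $O_{T_{\beta_2\circ\beta_1}}(1)$, $O_{T_{\beta_1\circ\beta_2}}(\frac{j_1}{q_1})$ and $O_{T_{\beta_2\circ\beta_1}}(\frac{j_2}{q_2})$ is finite.
   Context: For a real number $\gamma>1$ let $T_\gamma:[0,1)\to[0,1)$, $T_\gamma(x)=\gamma x \bmod 1$, and for reals $\gamma_1,\gamma_2>1$ let $T_{\gamma_1\circ\gamma_2}:=T_{\gamma_1}\circ T_{\gamma_2}$. At the point $1$ the map is defined by the left limit, $T_{\gamma_1\circ\gamma_2}(1):=\lim_{x\nearrow1}T_{\gamma_1\circ\gamma_2}(x)$. For a point $x$, $O_{T}(x):=\{T^k(x):k\ge1\}$ denotes its forward orbit under $T$. *)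

From HB Require Import structures.
From mathcomp Require Import all_boot all_order all_algebra.
From mathcomp Require Import all_classical all_reals all_analysis.
Set Implicit Arguments. Unset Strict Implicit. Unset Printing Implicit Defensive.
Import Order.TTheory GRing.Theory Num.Theory numFieldNormedType.Exports.
Local Open Scope ring_scope.
Local Open Scope classical_set_scope.

Definition fracR {R : realType} (x : R) : R := x - (Num.floor x)%:~R.

Definition Tb {R : realType} (g : R) (x : R) : R := fracR (g * x).

(* T_{g1 o g2} = T_g1 o T_g2, with the value at 1 given by the left limit *)
Definition Tcomp {R : realType} (g1 g2 : R) (x : R) : R :=
  if x == 1 then lim ((Tb g1 \o Tb g2) y @[y --> (1 : R)^'-])
  else Tb g1 (Tb g2 x).

Definition orbit_fwd {R : realType} (T : R -> R) (x : R) : set R :=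
  [set iter k.+1 T x | k in [set: nat]].

From HB Require Import structures.
From mathcomp Require Import all_boot all_order all_algebra.
From mathcomp Require Import all_classical all_reals all_analysis.
From mathcomp Require Import ring lra.
Import Order.TTheory GRing.Theory Num.Theory numFieldNormedType.Exports.
Local Open Scope ring_scope.
Local Open Scope classical_set_scope.

(** Since [b1 * b2 = k1 * k2] and [q1 * b1 = k1 * q2] are
    integers, [T_{b1 o b2}] maps the finite grid [(1/q1)Z ∩ [0,1]] into
    itself: both reductions mod 1 subtract integers, and multiplying by [q1]
    keeps everything integral.  The value at [1] is a left limit, i.e. the
    same expression with "mod 1" taking values in [(0,1]]; it lies on the
    grid for the same reason.  Both [1] and [j1/q1] are grid points. *)

Section OrbitGrid.
Context {R : realType}.
Implicit Types a b c t : R.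

(** The left limit of [fracR] at [t]: [t] mod 1, taken in [(0,1]]. *)
Definition fracL t : R := t - (Num.ceil t - 1)%:~R.

Lemma fracR_ge0 t : 0 <= fracR t.
Proof. by rewrite /fracR subr_ge0 floor_le. Qed.

Lemma fracR_lt1 t : fracR t < 1.
Proof.
by rewrite /fracR ltrBlDr addrC -[_ + 1]/(_ + 1%:~R) -rmorphD floorD1_gt.
Qed.

Lemma fracL_gt0 t : 0 < fracL t.
Proof. by rewrite /fracL subr_gt0 ltNge -ceil_le_int -ltNge ltrBlDr ltrDl. Qed.

Lemma fracL_le1 t : fracL t <= 1.
Proof. by rewrite /fracL rmorphB /= lerBlDr addrC subrK ceil_ge. Qed.

Lemma fracR_affine_near1 a c : 0 < a ->
  \forall y \near (1 : R)^'-, fracR (a * y + c) = fracL (a + c) - a * (1 - y).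
Proof.
move=> a0; have := fracL_gt0 (a + c); have := fracL_le1 (a + c).
rewrite /fracL; set m := Num.ceil (a + c) - 1 => hle hgt.
clearbody m; have e0 : 0 < (a + c - m%:~R) / a by apply: divr_gt0.
near=> y.
have hy : y < 1 by near: y; exact: nbhs_left_lt.
have hy2 : 1 - y < (a + c - m%:~R) / a by near: y; exact: nbhs_left_ltBl.
rewrite ltr_pdivlMr // in hy2.
rewrite /fracR; have -> : Num.floor (a * y + c) = m.
  apply: floor_def; rewrite rmorphD /=; apply/andP; split; nra.
by ring.
Unshelve. all: by end_near.
Qed.

Lemma Tb_comp_affine_near1 {a b} : 0 < a -> 0 < b ->
  \forall y \near (1 : R)^'-,
    (Tb a \o Tb b) y = a * b * y + (fracL (a * fracL b) - a * b).
Proof.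
move=> a0 b0; have ab0 : 0 < a * b by rewrite mulr_gt0.
near=> y.
have Eb : fracR (b * y + 0) = fracL (b + 0) - b * (1 - y).
  by near: y; exact: fracR_affine_near1.
have Eab : fracR (a * b * y + (a * fracL b - a * b)) =
    fracL (a * b + (a * fracL b - a * b)) - a * b * (1 - y).
  by near: y; exact: fracR_affine_near1.
rewrite !addr0 in Eb.
rewrite (_ : a * b + _ = a * fracL b) in Eab; last by ring.
rewrite /= /Tb Eb (_ : a * _ = a * b * y + (a * fracL b - a * b)) ?Eab; ring.
Unshelve. all: by end_near.
Qed.

Lemma lim_left_affine {f : R -> R} {x0 a c : R} :
  (\forall y \near x0^'-, f y = a * y + c) -> lim (f y @[y --> x0^'-]) = a * x0 + c.
Proof.
move=> hf; apply: cvg_lim => //.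
have hg : {near x0^'-, (fun y => a * y + c) =1 f}.
  by near=> y; apply/esym; near: y.
apply: (cvg_trans (near_eq_cvg hg)); apply: cvg_at_left_filter.
by apply: cvgD; [apply: cvgMr; exact: cvg_id | exact: cvg_cst].
Unshelve. all: by end_near.
Qed.

Lemma Tcomp_at1 {a b} : 0 < a -> 0 < b -> Tcomp a b 1 = fracL (a * fracL b).
Proof.
move=> a0 b0; rewrite /Tcomp eqxx.
by rewrite (lim_left_affine (Tb_comp_affine_near1 a0 b0)) mulr1 addrC subrK.
Qed.

Definition grid (q : nat) : set R :=
  [set x | 0 <= x <= 1 /\ q%:R * x \is a Num.int].

Lemma grid_finite {q} : (0 < q)%N -> finite_set (grid q).
Proof.
move=> q0; have qR : (0 : R) < q%:R by rewrite ltr0n.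
apply: (@sub_finite_set _ _ [set (n%:R / q%:R : R) | n in `I_q.+1]); last first.
  exact/finite_image/finite_II.
move=> x [/andP[x0 x1] qxZ].
have qx0 : 0 <= q%:R * x by rewrite mulr_ge0 // ltW.
move: qxZ; rewrite intrEge0 // => /natrP[n qxn].
exists n; last by rewrite -qxn mulrC mulKf // gt_eqF.
by rewrite /= ltnS -(ler_nat R) -qxn ler_piMr // ltW.
Qed.

Lemma grid1 q : grid q 1.
Proof. by split; [rewrite ler01 lexx | rewrite mulr1 rpred_nat]. Qed.

Lemma grid_frac {q j} : (0 < q)%N -> (j <= q)%N -> grid q (j%:R / q%:R).
Proof.
move=> q0 jq; have qR : (0 : R) < q%:R by rewrite ltr0n.
split; last by rewrite mulrC mulfVK ?gt_eqF ?rpred_nat.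
by rewrite divr_ge0 //= ler_pdivrMr // mul1r ler_nat.
Qed.

(** Both reductions mod 1 in [T_a o T_b] subtract integers. *)
Lemma grid_int_shift (q : nat) (a b x : R) (i j : int) :
  a * b \is a Num.int -> q%:R * a \is a Num.int -> q%:R * x \is a Num.int ->
  q%:R * (a * (b * x - i%:~R) - j%:~R) \is a Num.int.
Proof.
move=> abZ qaZ qxZ.
have -> : q%:R * (a * (b * x - i%:~R) - j%:~R)
        = a * b * (q%:R * x) - q%:R * a * i%:~R - q%:R * j%:~R by ring.
by apply: rpredB; first apply: rpredB; apply: rpredM; rewrite ?rpred_nat ?intr_int.
Qed.

Lemma Tcomp_grid {q : nat} {a b : R} : 0 < a -> 0 < b ->
  a * b \is a Num.int -> q%:R * a \is a Num.int ->
  forall x, grid q x -> grid q (Tcomp a b x).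
Proof.
move=> a0 b0 abZ qaZ x [_ qxZ]; have [->|x1] := eqVneq x 1.
  rewrite (Tcomp_at1 a0 b0); split; first by rewrite ltW ?fracL_gt0 ?fracL_le1.
  rewrite /fracL -[X in a * (X - _)]mulr1.
  by apply: grid_int_shift; rewrite // mulr1 rpred_nat.
rewrite /Tcomp (negbTE x1) /Tb; split; first by rewrite fracR_ge0 ltW ?fracR_lt1.
exact: grid_int_shift.
Qed.

Lemma orbit_fwd_finite (S : set R) (T : R -> R) (x : R) :
  finite_set S -> (forall y, S y -> S (T y)) -> S x -> finite_set (orbit_fwd T x).
Proof.
move=> Sfin TS Sx; apply: sub_finite_set Sfin => _ [k _ <-].
by elim: k => [|k IHk]; apply: TS.
Qed.

End OrbitGrid.

Theorem lemma4p2 (R : realType) (p1 q1 p2 q2 k1 k2 d1 j1 d2 j2 : nat) :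
  (0 < q1)%N -> (0 < q2)%N ->
  (q1 < p1)%N -> (q2 < p2)%N ->
  coprime p1 q1 -> coprime p2 q2 ->
  p1 = (k1 * q2)%N -> p2 = (k2 * q1)%N ->
  p1 = (d1 * q1 + j1)%N -> (j1 < q1)%N ->
  p2 = (d2 * q2 + j2)%N -> (j2 < q2)%N ->
  let b1 : R := p1%:R / q1%:R in
  let b2 : R := p2%:R / q2%:R in
  [/\ finite_set (orbit_fwd (Tcomp b1 b2) 1),
      finite_set (orbit_fwd (Tcomp b2 b1) 1),
      finite_set (orbit_fwd (Tcomp b1 b2) (j1%:R / q1%:R)) &
      finite_set (orbit_fwd (Tcomp b2 b1) (j2%:R / q2%:R))].
Proof.
move=> q10 q20 qp1 qp2 _ _ e1 e2 _ j1q _ j2q b1 b2.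
have Q1 : (q1%:R : R) != 0 by rewrite pnatr_eq0 -lt0n.
have Q2 : (q2%:R : R) != 0 by rewrite pnatr_eq0 -lt0n.
have b1_gt0 : 0 < b1 by rewrite divr_gt0 ?ltr0n ?(ltn_trans q10 qp1).
have b2_gt0 : 0 < b2 by rewrite divr_gt0 ?ltr0n ?(ltn_trans q20 qp2).
have b12Z : b1 * b2 \is a Num.int.
  rewrite (_ : b1 * b2 = (k1 * k2)%:R) ?rpred_nat // /b1 /b2 e1 e2 !natrM.
  by field; rewrite Q1 Q2.
have b21Z : b2 * b1 \is a Num.int by rewrite mulrC.
have q1b1Z : q1%:R * b1 \is a Num.int by rewrite /b1 mulrC mulfVK // rpred_nat.
have q2b2Z : q2%:R * b2 \is a Num.int by rewrite /b2 mulrC mulfVK // rpred_nat.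
have T12 := Tcomp_grid b1_gt0 b2_gt0 b12Z q1b1Z.
have T21 := Tcomp_grid b2_gt0 b1_gt0 b21Z q2b2Z.
have G1 : finite_set (grid q1 : set R) := grid_finite q10.
have G2 : finite_set (grid q2 : set R) := grid_finite q20.
split; [apply: orbit_fwd_finite G1 T12 _ | apply: orbit_fwd_finite G2 T21 _
       | apply: orbit_fwd_finite G1 T12 _ | apply: orbit_fwd_finite G2 T21 _].
- exact: grid1.
- exact: grid1.
- exact: grid_frac q10 (ltnW j1q).
- exact: grid_frac q20 (ltnW j2q).
Qed.
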